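(* Let $k\ge1$, $G=(V,E)$ an inductively $k$-independent graph with $k$-independence ordering $v_1,\dots,v_n$, $f:2^V\to\mathbb{R}_{\ge0}$ monotone submodular with $f(\emptyset)=0$, and $\beta>0$. Run algorithm PREEMPTIVE-GREEDY (described in the context), let $S_{\mathrm{out}}$ be its output and $U$ the set of all vertices that were ever contained in $S$ during the run. Then $f(U)\le(1+\beta^{-1})f(S_{\mathrm{out}})$.
   Context: $N(v)$ is the neighbourhood of $v$ (excluding $v$); $G$ is inductively $k$-independent with $k$-independence ordering $v_1,\dots,v_n$ if for every $i$, $G[N(v_i)\cap\{v_i,\dots,v_n\}]$ has no independent set of size more than $k$. Order $V$ by $v_1<\dots<v_n$. For $S\subseteq V$: $f_S(v)=f(S\cup\{v\})-f(S)$, and $\nu_f(S,u)=f_{S'}(u)$ where $S'=\{s\in S:s<u\}$. Algorithm PREEMPTIVE-GREEDY (parameter $\beta>0$): start with $S=\emptyset$; for $i=1,\dots,n$: let $C_i=N(v_i)\cap S$; if $f_S(v_i)\ge(1+\beta)\sum_{u\in C_i}\nu_f(S,u)$, replace $S$ by $(S\setminus C_i)\cup\{v_i\}$. Return the final $S$ as $S_{\mathrm{out}}$. *)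

From mathcomp Require Import all_boot all_order all_algebra.
Set Implicit Arguments. Unset Strict Implicit. Unset Printing Implicit Defensive.
Import Order.TTheory GRing.Theory Num.Theory.
Local Open Scope ring_scope.

Section PG.
Variables (T : finType) (e : rel T) (ord : seq T).

Definition is_ordering : Prop := uniq ord /\ forall v : T, v \in ord.

Definition vlt (u v : T) : bool := (index u ord < index v ord)%N.

Definition simple_graph : Prop := symmetric e /\ irreflexive e.

Definition nbhd (v : T) : {set T} := [set u | e v u & u != v].

Definition independent (A : {set T}) : bool :=
  [forall x in A, forall y in A, ~~ e x y].

(* G[N(v_i) ∩ {v_i,...,v_n}] has no independent set of size > k *)
Definition inductively_k_independent (k : nat) : Prop :=
  forall (v : T) (A : {set T}),
    A \subset nbhd v :&: [set u | ~~ vlt u v] ->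
    independent A -> (#|A| <= k)%N.

Variable (R : realFieldType) (f : {set T} -> R).

Definition monotone_fn : Prop := forall A B : {set T}, A \subset B -> f A <= f B.
Definition submodular_fn : Prop :=
  forall A B : {set T}, f (A :|: B) + f (A :&: B) <= f A + f B.
Definition nonneg_fn : Prop := forall A : {set T}, 0 <= f A.

Definition marg (S : {set T}) (v : T) : R := f (v |: S) - f S.

Definition nu (S : {set T}) (u : T) : R := marg [set s in S | vlt s u] u.

Variable (beta : R).

(* one iteration; state = (current S, union of all S seen so far) *)
Definition pg_step (st : {set T} * {set T}) (v : T) : {set T} * {set T} :=
  let S := st.1 in
  let C := nbhd v :&: S in
  if (1 + beta) * (\sum_(u in C) nu S u) <= marg S v
  then ((S :\: C) :|: [set v], st.2 :|: [set v])
  else st.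

Definition pg_run : {set T} * {set T} := foldl pg_step (set0, set0) ord.

Definition pg_out : {set T} := pg_run.1.
Definition pg_ever : {set T} := pg_run.2.

End PG.

From mathcomp Require Import all_boot all_order all_algebra.
From mathcomp Require Import lra.
Set Implicit Arguments. Unset Strict Implicit. Unset Printing Implicit Defensive.
Import Order.TTheory GRing.Theory Num.Theory.
Local Open Scope ring_scope.

(* The run keeps the invariant  S ⊆ U  and  beta f(U) <= (1 + beta) f(S).
   When v replaces its conflict set C, the new part of U gains at most
   f_S(v) (diminishing returns, S ⊆ U), while f(S) grows by at least
   f_S(v) - sum_{u in C} nu(S,u) >= beta/(1 + beta) f_S(v): removing C loses
   at most sum nu(S,u), as seen by putting C back in increasing order.
   Neither the graph nor k nor the sign of f play any role. *)

Section Submodular.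
Variables (T : finType) (R : realFieldType) (f : {set T} -> R).
Hypotheses (f_mono : monotone_fn f) (f_sub : submodular_fn f).

Lemma marg_antimono (A B : {set T}) (x : T) :
  A \subset B -> marg f B x <= marg f A x.
Proof.
move=> AB; rewrite /marg; case xB: (x \in B).
  rewrite (setUidPr _ : x |: B = B) ?sub1set // subrr subr_ge0.
  exact/f_mono/subsetUr.
have := f_sub (x |: A) B.
have -> : (x |: A) :|: B = x |: B by rewrite -setUA (setUidPr AB).
have -> : (x |: A) :&: B = A.
  apply/setP => y; rewrite !inE; case: (eqVneq y x) => [-> | _] /=.
    by rewrite xB; apply/esym/negbTE; apply: contraFN xB => /(subsetP AB).
  by apply/andb_idr => /(subsetP AB).
by move=> ?; lra.
Qed.

Variable ord : seq T.

Lemma restore_min_le_nu (S C : {set T}) (m : T) :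
  m \in C -> (forall u, u \in C -> index m ord <= index u ord)%N ->
  f (S :\: (C :\ m)) - f (S :\: C) <= nu ord f S m.
Proof.
move=> mC m_min.
have S_lt_m : [set s in S | vlt ord s m] \subset S :\: C.
  apply/subsetP => s; rewrite !inE => /andP[sS s_lt]; rewrite sS andbT.
  by apply: contraTN s_lt => /m_min; rewrite /vlt leqNgt.
have S_restored : S :\: (C :\ m) \subset m |: (S :\: C).
  apply/subsetP => y; rewrite !inE.
  by case: (eqVneq y m) => //= _ /andP[-> ->]; rewrite andbT.
have := marg_antimono m S_lt_m; have := f_mono S_restored; rewrite /nu /marg; lra.
Qed.

Lemma setD_loss_le_sum_nu (S C : {set T}) :
  f S - f (S :\: C) <= \sum_(u in C) nu ord f S u.
Proof.
have [n] := ubnP #|C|; elim: n C => // n IH C; rewrite ltnS => C_small.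
have [-> | [x xC]] := set_0Vmem C; first by rewrite setD0 big_set0 subrr.
have [m mC0 m_min] := arg_minnP (fun u => index u ord) xC.
have mC : m \in C := mC0.
have IHm : f S - f (S :\: (C :\ m)) <= \sum_(u in C :\ m) nu ord f S u.
  by apply: IH; move: C_small; rewrite (cardsD1 m C) mC.
rewrite (big_setD1 _ mC) /=.
by have := restore_min_le_nu S mC m_min; lra.
Qed.

Lemma swap_gain (beta : R) (S C : {set T}) (v : T) :
  0 < beta -> (1 + beta) * (\sum_(u in C) nu ord f S u) <= marg f S v ->
  beta * marg f S v <= (1 + beta) * (f (v |: (S :\: C)) - f S).
Proof.
move=> beta_gt0 swap.
have loss := setD_loss_le_sum_nu S C.
have gain := marg_antimono v (subsetDl S C).
have : (1 + beta) * (marg f S v - \sum_(u in C) nu ord f S u)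
       <= (1 + beta) * (f (v |: (S :\: C)) - f S).
  by apply: ler_wpM2l; [lra | move: gain; rewrite /marg; lra].
lra.
Qed.

End Submodular.

Section PreemptiveGreedy.
Variables (T : finType) (e : rel T) (ord : seq T).
Variables (R : realFieldType) (f : {set T} -> R) (beta : R).
Hypotheses (f_mono : monotone_fn f) (f_sub : submodular_fn f).
Hypothesis beta_gt0 : 0 < beta.

Definition pg_invariant (st : {set T} * {set T}) : Prop :=
  st.1 \subset st.2 /\ beta * f st.2 <= (1 + beta) * f st.1.

Lemma pg_step_invariant st v :
  pg_invariant st -> pg_invariant (pg_step e ord f beta st v).
Proof.
case: st => S U [/= SU inv]; rewrite /pg_step /=.
case: ifP => // swap; split => /=.
  exact/setSU/(subset_trans (subsetDl _ _) SU).
have S_gain := swap_gain f_mono f_sub beta_gt0 swap.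
have U_gain : beta * (f (v |: U) - f U) <= beta * marg f S v.
  by rewrite ler_pM2l //; apply: marg_antimono.
rewrite !(setUC _ [set v]); lra.
Qed.

Lemma pg_run_invariant : f set0 = 0 -> pg_invariant (pg_run e ord f beta).
Proof.
move=> f0.
have foldl_inv s st :
    pg_invariant st -> pg_invariant (foldl (pg_step e ord f beta) st s).
  by elim: s st => //= v s IH st /pg_step_invariant/IH.
by apply: foldl_inv; split; rewrite //= f0 !mulr0.
Qed.

End PreemptiveGreedy.

Theorem lemma14 (T : finType) (e : rel T) (ord : seq T) (k : nat)
  (R : realFieldType) (f : {set T} -> R) (beta : R) :
  simple_graph e -> (1 <= k)%N -> is_ordering ord ->
  inductively_k_independent e ord k ->
  nonneg_fn f -> monotone_fn f -> submodular_fn f -> f set0 = 0 ->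
  0 < beta ->
  f (pg_ever e ord f beta) <= (1 + beta^-1) * f (pg_out e ord f beta).
Proof.
move=> _ _ _ _ _ f_mono f_sub f0 beta_gt0.
have [_ inv] := pg_run_invariant e ord f_mono f_sub beta_gt0 f0.
rewrite -(ler_pM2l beta_gt0) mulrA mulrDr mulr1 mulfV ?gt_eqF // [beta + 1]addrC.
exact: inv.
Qed.
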